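(* Let $n \ge 1$ and $t$ be integers with $0 \le t \le n/3$, and assume $n \ge 4$ if $t = 0$. Put $m = n - 3t$. Then the maximum of $\mathrm{mis}(G)$ over all graphs $G$ on $n$ vertices that contain no induced triangle matching of size $t+1$ equals \[ \mathrm{mis}_t(n)=\begin{cases} 3^t\cdot 2^{m/2} & \text{if } m \text{ is even},\\ 3^{t-1}\cdot 2^{(m+3)/2} & \text{if } m \text{ is odd and } t>0,\\ 5\cdot 2^{(n-5)/2} & \text{if } m \text{ is odd and } t=0. \end{cases} \]
   Context: All graphs are finite and simple. For a graph $G$, $\mathrm{mis}(G)$ denotes the number of maximal independent sets of $G$ (independent sets not properly contained in another independent set). An induced triangle matching in $G$ is a set of vertex-disjoint triangles in $G$ whose vertex set induces in $G$ exactly the disjoint union of these triangles (no edges of $G$ between different triangles); its size is the number of triangles. $\mathrm{mis}_t(n)$ is the maximum of $\mathrm{mis}(G)$ over all $n$-vertex graphs $G$ containing no induced triangle matching of size $t+1$. (The case $t=0$ corresponds to triangle-free graphs.) *)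

From mathcomp Require Import all_boot all_order.
Set Implicit Arguments. Unset Strict Implicit. Unset Printing Implicit Defensive.

Section Graphs.
Variable T : finType.
Variable e : rel T.

Definition simple_graph : Prop := symmetric e /\ irreflexive e.

Definition independent (S : {set T}) : bool :=
  [forall x in S, forall y in S, ~~ e x y].

Definition maximal_independent (S : {set T}) : bool :=
  independent S && [forall x, (x \notin S) ==> ~~ independent (x |: S)].

Definition mis : nat := #|[set S : {set T} | maximal_independent S]|.

Definition triangle (A : {set T}) : bool :=
  (#|A| == 3) && [forall x in A, forall y in A, (x != y) ==> e x y].

Definition induced_triangle_matching (M : {set {set T}}) : bool :=
  [forall A in M, triangle A] &&
  [forall A in M, forall B in M, (A != B) ==>
     [disjoint A & B] && [forall x in A, forall y in B, ~~ e x y]].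

Definition has_induced_triangle_matching (k : nat) : Prop :=
  exists M : {set {set T}}, induced_triangle_matching M /\ #|M| = k.
End Graphs.

Definition mis_t_value (n t : nat) : nat :=
  let m := n - 3 * t in
  if ~~ odd m then 3 ^ t * 2 ^ (m %/ 2)
  else if 0 < t then 3 ^ (t - 1) * 2 ^ ((m + 3) %/ 2)
  else 5 * 2 ^ ((n - 5) %/ 2).

(* Upper bound, by induction on n.  Let v have minimum degree d.  Every maximal
   independent set meets N[v], and choosing its vertex u there deletes N[u], of
   size at least d + 1; hence mis <= (d + 1) mis_t(n - d - 1) <= mis_t(n) unless
   d = 2.  For d = 2 and N(v) = {a, b}, a case analysis (N[v] a triangle, which
   is either a component, removed together with one unit of t, or touches a
   vertex of degree 3; a or b of degree 3; N(a) and N(b) closing a 4-cycle or a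
   path on five vertices) gives branchings with vectors (3,3,4), (3,4,4) and
   (3,5,5,5).  The corresponding inequalities for the closed form [mist] hold
   for n <= 13 and t <= 4 by computation, and propagate beyond because [mist]
   doubles under n -> n + 2 and triples under (n, t) -> (n + 3, t + 1).
   Lower bound: disjoint unions of triangles and edges, or of a 5-cycle and
   edges, attain the value. *)

From mathcomp Require Import all_boot all_order.
From mathcomp Require Import zify.
Set Implicit Arguments. Unset Strict Implicit. Unset Printing Implicit Defensive.

(* [mis0 m] is mis_0(m) for all m >= 1; the formula of the theorem is wrong
   for the exceptional values m = 1 and m = 3. *)
Definition mis0 (m : nat) : nat :=
  if m == 1 then 1 else if m == 3 then 2
  else if odd m then 5 * 2 ^ ((m - 5) %/ 2) else 2 ^ (m %/ 2).

Definition mist_form (k m : nat) : nat :=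
  if ~~ odd m then 3 ^ k * 2 ^ (m %/ 2)
  else if 0 < k then 3 ^ (k - 1) * 2 ^ ((m + 3) %/ 2) else mis0 m.

(* mis_t(n) for every t: an n-vertex graph has at most n/3 disjoint triangles. *)
Definition mist (n t : nat) : nat :=
  mist_form (minn t (n %/ 3)) (n - 3 * minn t (n %/ 3)).

Lemma mis0_odd m : odd m -> 5 <= m -> mis0 m = 5 * 2 ^ ((m - 5) %/ 2).
Proof.
move=> m_odd m_ge5; rewrite /mis0 m_odd.
by rewrite ifF; last (by apply/eqP; lia); rewrite ifF //; apply/eqP; lia.
Qed.

Lemma mist_formSS k m : (k, m) != (0, 3) -> mist_form k m.+2 = 2 * mist_form k m.
Proof.
move=> km_ne; rewrite /mist_form /= negbK; case: ifP => [m_even|/negbFE m_odd] /=.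
  by rewrite (_ : m.+2 %/ 2 = (m %/ 2).+1) ?expnS; lia.
case: k km_ne => [|k] km_ne /=; last first.
  by rewrite (_ : (m.+2 + 3) %/ 2 = ((m + 3) %/ 2).+1) ?expnS; lia.
have [m_le3|m_gt3] := leqP m 3.
  by case: m m_odd m_le3 km_ne => [|[|[|[]]]].
rewrite !mis0_odd ?m_odd //= ?negbK //; try lia.
by rewrite (_ : (m.+2 - 5) %/ 2 = ((m - 5) %/ 2).+1) ?expnS; lia.
Qed.

Lemma mist_form_triple k m : 3 * mist_form k m <= mist_form k.+1 m.
Proof.
rewrite /mist_form; case: ifP => [_|/negbFE m_odd] /=; first by rewrite expnS; lia.
case: k => [|k] /=; last by rewrite !subn1 /= expnS; lia.
have [m_le3|m_gt3] := leqP m 3; first by case: m m_odd m_le3 => [|[|[|[]]]].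
have := modn2 m; rewrite m_odd /= => m_mod2.
rewrite mis0_odd //; last lia.
rewrite (_ : (m + 3) %/ 2 = (m - 5) %/ 2 + 4); last lia.
by rewrite expnD subnn expn0; lia.
Qed.

Lemma mist_formS k m : (0 < k) || ~~ odd m -> mist_form k.+1 m = 3 * mist_form k m.
Proof.
move=> k_or_even; rewrite /mist_form; case: ifP => [_|/negbFE m_odd] /=.
  by rewrite expnS; lia.
by case: k k_or_even => [|k]; rewrite /= ?m_odd //= => _; rewrite !subn1 /= expnS; lia.
Qed.

Lemma mistE n t : t <= n %/ 3 -> mist n t = mist_form t (n - 3 * t).
Proof. by move=> t_le; rewrite /mist (minn_idPl t_le). Qed.

Lemma mist_cap x n t : x <= n -> mist x t = mist x (minn t (n %/ 3)).
Proof. by move=> x_le; rewrite /mist (_ : minn (minn t _) _ = minn t (x %/ 3)) //; lia. Qed.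

Lemma mist_pred_triangle x t : 1 <= t -> 3 <= x ->
  mist x t = mist_form (minn t (x %/ 3)).-1.+1 (x - 3 * minn t (x %/ 3)) /\
  mist (x - 3) (t - 1) = mist_form (minn t (x %/ 3)).-1 (x - 3 * minn t (x %/ 3)).
Proof.
move=> t_ge1 x_ge3; rewrite /mist prednK; last lia.
split=> //; rewrite (_ : minn (t - 1) ((x - 3) %/ 3) = (minn t (x %/ 3)).-1); last lia.
by rewrite (_ : x - 3 - 3 * _ = x - 3 * minn t (x %/ 3)) //; lia.
Qed.

Lemma mist_triple x t : 1 <= t -> 3 <= x -> 3 * mist (x - 3) (t - 1) <= mist x t.
Proof.
by move=> t_ge1 x_ge3; have [-> ->] := mist_pred_triangle t_ge1 x_ge3; apply: mist_form_triple.
Qed.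

Lemma mist_subn3 x t : 2 <= t -> 6 <= x -> mist x t = 3 * mist (x - 3) (t - 1).
Proof.
move=> t_ge2 x_ge6; have [t_ge1 x_ge3] : 1 <= t /\ 3 <= x by lia.
have [-> ->] := mist_pred_triangle t_ge1 x_ge3.
by apply: mist_formS; apply/orP; left; lia.
Qed.

Lemma mist_subn2 n t d : t <= n %/ 3 -> 3 * t + 7 <= n -> (1 <= t) || (14 <= n) ->
  d <= 5 -> mist (n - d) t = 2 * mist (n - 2 - d) t.
Proof.
move=> t_le n_ge t_or_n d_le5; rewrite !mistE; try lia.
rewrite (_ : n - d - 3 * t = (n - 2 - d - 3 * t).+2); last lia.
by apply: mist_formSS; rewrite xpair_eqE; apply/nandP; case: (posnP t) => t0; [right|left]; lia.
Qed.

Definition wsum (cs : seq (nat * nat)) (n t : nat) : nat :=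
  sumn [seq p.1 * mist (n - p.2) t | p <- cs].

Lemma wsum_scale cs n t n' t' c :
  (forall p, p \in cs -> mist (n - p.2) t = c * mist (n' - p.2) t') ->
  wsum cs n t = c * wsum cs n' t'.
Proof.
rewrite /wsum; elim: cs => [|p cs IH] eq_cs /=; first by rewrite muln0.
rewrite eq_cs ?mem_head // IH ?mulnDr ?(mulnCA c) // => q q_cs.
by apply: eq_cs; rewrite in_cons q_cs orbT.
Qed.

Definition small_cases_ok (cs : seq (nat * nat)) (o tm : nat) : bool :=
  all (fun n => all (fun t => (o <= n) ==> (tm <= t) ==> (wsum cs n t <= mist n t))
    (iota 0 5)) (iota 0 14).

(* Beyond n = 13 and t = 4 both sides of [wsum cs n t <= mist n t] scale by 2
   when n decreases by 2, or by 3 when (n, t) decreases by (3, 1), so checking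
   finitely many cases suffices. *)
Lemma mist_recurrence cs o tm : small_cases_ok cs o tm ->
  all (fun p => p.2 <= o) cs -> o <= 5 -> 3 * tm <= o -> tm <= 1 ->
  forall n t, o <= n -> tm <= t -> wsum cs n t <= mist n t.
Proof.
move=> /allP small /allP offs_le o_le5 tm3_le tm_le1.
have offs_le5 p : p \in cs -> p.2 <= 5 by move/offs_le/leq_trans; apply.
elim/ltn_ind => n IH t o_le tm_le_t.
have -> : wsum cs n t = wsum cs n (minn t (n %/ 3)).
  by rewrite -[RHS]mul1n; apply: wsum_scale => p _; rewrite mul1n (mist_cap t (leq_subr _ n)).
rewrite (mist_cap t (leqnn n)).
have : tm <= minn t (n %/ 3) <= n %/ 3 by apply/andP; split; lia.
move: (minn t _) => {}t /andP [{}tm_le_t t_le].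
have [/andP [n_ge t_or_n]|not_step2] := boolP ((3 * t + 7 <= n) && ((1 <= t) || (14 <= n))).
  rewrite (wsum_scale (n' := n - 2) (t' := t) (c := 2)); last first.
    by move=> p /offs_le5; apply: mist_subn2.
  rewrite -[n]subn0 mist_subn2 // !subn0 leq_mul2l /=.
  by apply: IH; lia.
have [/andP [t_ge2 n_ge11]|not_step3] := boolP ((2 <= t) && (11 <= n)).
  rewrite (wsum_scale (n' := n - 3) (t' := t - 1) (c := 3)); last first.
    by move=> [c d] /offs_le5 /= d_le5; rewrite subnAC mist_subn3 //; lia.
  rewrite mist_subn3 //; last lia.
  rewrite leq_mul2l /=.
  by apply: IH; lia.
have [n_le13 t_le4] : n <= 13 /\ t <= 4 by lia.
move: (small n); rewrite mem_iota => /(_ (leq_ltn_trans n_le13 (ltnSn _))) /allP.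
move=> /(_ t); rewrite mem_iota => /(_ (leq_ltn_trans t_le4 (ltnSn _))).
by rewrite o_le tm_le_t.
Qed.

Lemma mist_leqSn n t : mist n t <= mist n.+1 t.
Proof.
have small : small_cases_ok [:: (1, 1)] 1 0 by vm_compute.
have := mist_recurrence small isT isT isT isT (ltn0Sn n) (leq0n t).
by rewrite /wsum /= subn1 /= mul1n addn0.
Qed.

Lemma leq_mist x y t : x <= y -> mist x t <= mist y t.
Proof.
move=> /subnK <-; elim: (y - x) => [|k IH] //.
by apply: leq_trans IH (mist_leqSn _ _).
Qed.

Lemma mist_branch_22 n t : 2 <= n -> 2 * mist (n - 2) t <= mist n t.
Proof.
have small : small_cases_ok [:: (2, 2)] 2 0 by vm_compute.
move=> n_ge2; have := mist_recurrence small isT isT isT isT n_ge2 (leq0n t).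
by rewrite /wsum /= addn0.
Qed.

Lemma mist_branch_4444 n t : 4 <= n -> 4 * mist (n - 4) t <= mist n t.
Proof.
have small : small_cases_ok [:: (4, 4)] 4 0 by vm_compute.
move=> n_ge4; have := mist_recurrence small isT isT isT isT n_ge4 (leq0n t).
by rewrite /wsum /= addn0.
Qed.

Lemma mist_branch_55555 n t : 5 <= n -> 5 * mist (n - 5) t <= mist n t.
Proof.
have small : small_cases_ok [:: (5, 5)] 5 0 by vm_compute.
move=> n_ge5; have := mist_recurrence small isT isT isT isT n_ge5 (leq0n t).
by rewrite /wsum /= addn0.
Qed.

Lemma mist_branch_334 n t : 4 <= n -> 1 <= t -> 2 * mist (n - 3) t + mist (n - 4) t <= mist n t.
Proof.
have small : small_cases_ok [:: (2, 3); (1, 4)] 4 1 by vm_compute.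
move=> n_ge4 t_ge1; have := mist_recurrence small isT isT isT isT n_ge4 t_ge1.
by rewrite /wsum /= mul1n addn0.
Qed.

Lemma mist_branch_344 n t : 4 <= n -> mist (n - 3) t + 2 * mist (n - 4) t <= mist n t.
Proof.
have small : small_cases_ok [:: (1, 3); (2, 4)] 4 0 by vm_compute.
move=> n_ge4; have := mist_recurrence small isT isT isT isT n_ge4 (leq0n t).
by rewrite /wsum /= mul1n addn0.
Qed.

Lemma mist_branch_3555 n t : 5 <= n -> mist (n - 3) t + 3 * mist (n - 5) t <= mist n t.
Proof.
have small : small_cases_ok [:: (1, 3); (3, 5)] 5 0 by vm_compute.
move=> n_ge5; have := mist_recurrence small isT isT isT isT n_ge5 (leq0n t).
by rewrite /wsum /= mul1n addn0.
Qed.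

Lemma mist_branch_deg k n t : k != 3 -> k <= n -> k * mist (n - k) t <= mist n t.
Proof.
elim/ltn_ind: k => k IH k_ne3 k_le.
case: k IH k_ne3 k_le => [|[|[|[|[|[|k]]]]]] IH k_ne3 k_le //.
- by rewrite mul1n; apply: leq_mist; apply: leq_subr.
- exact: mist_branch_22.
- exact: mist_branch_4444.
- exact: mist_branch_55555.
have IHk : k.+4 * mist (n - k.+4) t <= mist n t by apply: IH => //; lia.
have dbl : 2 * mist (n - k.+4.+2) t <= mist (n - k.+4) t.
  by rewrite (_ : n - k.+4.+2 = n - k.+4 - 2); [apply: mist_branch_22|]; lia.
nia.
Qed.

Section MaximalIndependentSets.
Variables (T : finType) (e : rel T).
Hypotheses (e_sym : symmetric e) (e_irr : irreflexive e).

Definition nbhd (V : {set T}) x := [set y in V | e x y].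
Definition cnbhd (V : {set T}) x := x |: nbhd V x.
Definition mis_of (V : {set T}) : {set {set T}} :=
  [set S : {set T} | [&& S \subset V, independent e S &
     [forall x in V, (x \notin S) ==> [exists y in S, e x y]]]].
Definition itm_free (t : nat) (V : {set T}) : Prop := forall M : {set {set T}},
  induced_triangle_matching e M -> (forall A, A \in M -> A \subset V) -> #|M| != t.+1.

Lemma adj_neq x y : e x y -> x != y.
Proof. by apply: contraTneq => ->; rewrite e_irr. Qed.

Lemma independentP (S : {set T}) :
  reflect (forall x y, x \in S -> y \in S -> ~~ e x y) (independent e S).
Proof.
apply: (iffP forallP) => [indS x y xS yS|indS x].
  by move: (indS x); rewrite xS => /forallP /(_ y); rewrite yS.
by apply/implyP => xS; apply/forallP => y; apply/implyP => yS; apply: indS.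
Qed.

Lemma independentF (S : {set T}) x y :
  independent e S -> x \in S -> y \in S -> e x y -> False.
Proof. by move=> /independentP indS xS yS; apply/negP; apply: indS. Qed.

Lemma independentS (S S' : {set T}) :
  S' \subset S -> independent e S -> independent e S'.
Proof.
move=> /subsetP sub /independentP indS; apply/independentP => x y xS yS.
by apply: indS; apply: sub.
Qed.

Lemma independentU1 (S : {set T}) x : independent e S -> x \notin S ->
  independent e (x |: S) = ~~ [exists y in S, e x y].
Proof.
move=> /independentP indS xS; apply/independentP/idP.
  move=> indxS; apply/existsP => [[y /andP [yS exy]]].
  by move: (indxS x y); rewrite !inE eqxx yS orbT exy => /(_ isT isT).
move=> /existsP noadj y z; rewrite !inE => /predU1P [->|yS] /predU1P [->|zS].
- by rewrite e_irr.
- by apply/negP => exz; apply: noadj; exists z; rewrite zS.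
- by rewrite e_sym; apply/negP => exy; apply: noadj; exists y; rewrite yS.
- exact: indS.
Qed.

Lemma mis_ofP (V S : {set T}) : reflect [/\ S \subset V, independent e S &
   forall x, x \in V -> x \notin S -> exists2 y, y \in S & e x y] (S \in mis_of V).
Proof.
rewrite inE; apply: (iffP and3P) => [[SV indS /forallP dom]|[SV indS dom]].
  split=> // x xV xS; move: (dom x); rewrite xV xS => /existsP [y /andP [yS exy]].
  by exists y.
split=> //; apply/forallP => x; apply/implyP => xV; apply/implyP => xS.
by have [y yS exy] := dom x xV xS; apply/existsP; exists y; rewrite yS.
Qed.

Lemma mis_setT : mis e = #|mis_of setT|.
Proof.
apply: eq_card => S; rewrite !inE /maximal_independent subsetT /=.
case indS: (independent e S) => //=.
apply: eq_forallb => x; rewrite in_setT; case: (boolP (x \in S)) => xS //=.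
by rewrite independentU1 ?negbK.
Qed.

Lemma mis_dominates (V S : {set T}) v : v \in V -> S \in mis_of V ->
  v \in S \/ exists2 y, y \in S & y \in nbhd V v.
Proof.
move=> vV /mis_ofP [SV _ dom]; case: (boolP (v \in S)) => vS; first by left.
right; have [y yS evy] := dom v vV vS; exists y => //.
by rewrite !inE evy (subsetP SV y yS).
Qed.

Lemma cnbhd_sub (V : {set T}) u : u \in V -> cnbhd V u \subset V.
Proof. by move=> uV; apply/subsetP => x /setU1P [->|]; rewrite // inE => /andP []. Qed.

Lemma nbhd_sub_cnbhd (V : {set T}) u : nbhd V u \subset cnbhd V u.
Proof. exact: subsetUr. Qed.

Lemma card_cnbhd (V : {set T}) u : #|cnbhd V u| = #|nbhd V u|.+1.
Proof. by rewrite cardsU1 !inE e_irr andbF. Qed.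

Lemma independent_cnbhdI (V S : {set T}) u :
  independent e S -> u \in S -> S :&: cnbhd V u = [set u].
Proof.
move=> indS uS; apply/setP => x; rewrite !inE.
have [->|x_ne] := eqVneq x u; first by rewrite uS.
by apply/negP => /and3P [xS _ eux]; apply: independentF indS uS xS eux.
Qed.

Lemma setI_set1 (S : {set T}) x : S :&: [set x] = if x \in S then [set x] else set0.
Proof.
case: ifP => xS; apply/setP => y; rewrite !inE;
  by case: (eqVneq y x) => [->|]; rewrite ?xS ?andbF.
Qed.

(* Removing the trace X of a maximal independent set S is injective on the
   sets with the same trace A, and lands in mis_of (V :\: X) as soon as X
   contains every neighbour of A. *)
Lemma card_mis_trace (V A X : {set T}) :
  (forall x, x \in A -> nbhd V x \subset X) ->
  #|[set S in mis_of V | S :&: X == A]| <= #|mis_of (V :\: X)|.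
Proof.
move=> nbhdA.
set F := [set S in mis_of V | S :&: X == A].
have inj : {in F &, injective (fun S => S :\: X)}.
  move=> S1 S2; rewrite !inE => /andP [_ /eqP S1X] /andP [_ /eqP S2X] eqD.
  by rewrite -(setID S1 X) -(setID S2 X) S1X S2X eqD.
rewrite -(card_in_imset inj); apply: subset_leq_card; apply/subsetP => S'.
move=> /imsetP [S]; rewrite inE => /andP [/mis_ofP [SV indS dom] /eqP SX] ->.
apply/mis_ofP; split.
- exact: setSD.
- by apply: independentS indS; apply: subsetDl.
move=> x; rewrite !inE => /andP [xX xV] /nandP [|xS]; first by rewrite negbK (negbTE xX).
have [y yS exy] := dom x xV xS; exists y => //; rewrite inE yS andbT.
apply/negP => yX; move/negP: xX; apply.
have yA : y \in A by rewrite -SX inE yS yX.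
by apply: (subsetP (nbhdA y yA)); rewrite inE xV e_sym.
Qed.

Lemma card_mis_branch (V : {set T}) (cls : seq ({set T} * {set T})) :
  (forall p, p \in cls -> forall x, x \in p.1 -> nbhd V x \subset p.2) ->
  (forall S, S \in mis_of V -> has (fun p => S :&: p.2 == p.1) cls) ->
  #|mis_of V| <= \sum_(p <- cls) #|mis_of (V :\: p.2)|.
Proof.
move=> nbhd_cls covered.
suff : forall F : {set {set T}}, F \subset mis_of V ->
    (forall S, S \in F -> has (fun p => S :&: p.2 == p.1) cls) ->
    #|F| <= \sum_(p <- cls) #|mis_of (V :\: p.2)| by apply.
elim: cls nbhd_cls {covered} => [|p cls IH] nbhd_cls F FV covered.
  suff -> : F = set0 by rewrite cards0.
  by apply/setP => S; rewrite inE; apply/negP => /covered.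
rewrite big_cons -(setID F [set S | S :&: p.2 == p.1]).
apply: leq_trans (leq_card_setU _ _) _; apply: leq_add.
  apply: leq_trans (card_mis_trace (nbhd_cls p (mem_head _ _))).
  apply: subset_leq_card; apply/subsetP => S /setIP [SF SpX].
  by rewrite inE in SpX; rewrite inE (subsetP FV S SF) SpX.
apply: IH.
- by move=> q q_cls; apply: nbhd_cls; rewrite in_cons q_cls orbT.
- by apply: subset_trans FV; apply: subsetDl.
move=> S /setDP [SF]; rewrite inE => SpX; move: (covered S SF) => /=.
by rewrite (negbTE SpX).
Qed.

Lemma card_mis_cover (V : {set T}) (us : seq T) :
  (forall S, S \in mis_of V -> exists2 u, u \in us & u \in S) ->
  #|mis_of V| <= \sum_(u <- us) #|mis_of (V :\: cnbhd V u)|.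
Proof.
move=> covered.
have := @card_mis_branch V [seq ([set u], cnbhd V u) | u <- us].
rewrite big_map; apply=> [_ /mapP [u _ ->] x /set1P -> /=|S SV].
  exact: subsetUr.
have [u u_us uS] := covered S SV; apply/hasP; exists ([set u], cnbhd V u).
  by apply/mapP; exists u.
by case/mis_ofP: SV => _ indS _ /=; rewrite independent_cnbhdI.
Qed.

Lemma cards3 (x y z : T) : x != y -> x != z -> y != z -> #|[set x; y; z]| = 3.
Proof.
move=> x_ne_y x_ne_z y_ne_z.
rewrite (_ : [set x; y; z] = [set w in [:: x; y; z]]); last first.
  by apply/setP => w; rewrite !inE orbA.
by rewrite cardsE; apply/card_uniqP; rewrite /= !inE negb_or x_ne_y x_ne_z y_ne_z.
Qed.

Lemma triangle3 x y z : e x y -> e x z -> e y z -> triangle e [set x; y; z].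
Proof.
move=> exy exz eyz; apply/andP; split.
  by rewrite cards3 ?adj_neq.
apply/forall_inP => a a_in; apply/forall_inP => b b_in; apply/implyP => a_ne_b.
move: a_in b_in a_ne_b; rewrite !inE -!orbA.
by case/or3P => /eqP-> /or3P [] /eqP->; rewrite ?eqxx // 1?e_sym.
Qed.

Lemma triangle_gt0 (A : {set T}) : triangle e A -> exists x, x \in A.
Proof. by case/andP => /eqP cardA _; apply/set0Pn; rewrite -card_gt0 cardA. Qed.

Lemma induced_triangle_matchingU1 (M : {set {set T}}) (Tr : {set T}) :
  induced_triangle_matching e M -> triangle e Tr ->
  (forall A, A \in M -> [disjoint Tr & A] && [forall x in Tr, forall y in A, ~~ e x y]) ->
  induced_triangle_matching e (Tr |: M).
Proof.
move=> /andP [/forall_inP triM /forall_inP sepM] triTr sepTr; apply/andP; split.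
  by apply/forall_inP => A /setU1P [->|/triM].
apply/forall_inP => A A_in; apply/forall_inP => B B_in; apply/implyP => A_ne_B.
case/setU1P: A_in A_ne_B => [->|AM]; case/setU1P: B_in => [->|BM]; rewrite ?eqxx //.
- by move=> _; apply: sepTr.
- move=> _; case/andP: (sepTr A AM) => disTrA /forall_inP noedge.
  rewrite disjoint_sym disTrA; apply/forall_inP => x xA; apply/forall_inP => y yTr.
  by rewrite e_sym; move/forall_inP: (noedge y yTr); apply.
- by move=> A_ne_B; move/forall_inP: (sepM A AM) => /(_ B BM); rewrite A_ne_B.
Qed.

Lemma itm_freeS t (V W : {set T}) : W \subset V -> itm_free t V -> itm_free t W.
Proof.
move=> WV free M itmM MW; apply: free itmM _ => A AM.
exact: subset_trans (MW A AM) WV.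
Qed.

Lemma itm_free0_triangle (V Tr : {set T}) :
  itm_free 0 V -> triangle e Tr -> Tr \subset V -> False.
Proof.
move=> free triTr TrV.
have itmTr : induced_triangle_matching e [set Tr].
  apply/andP; split; first by apply/forall_inP => A /set1P ->.
  by apply/forall_inP => A /set1P ->; apply/forall_inP => B /set1P ->; rewrite eqxx.
have inV A : A \in [set Tr] -> A \subset V by move/set1P ->.
by move: (free _ itmTr inV); rewrite cards1.
Qed.

(* A triangle that is a union of components can be added to any induced
   triangle matching avoiding it. *)
Lemma itm_free_remove_triangle t (V Tr : {set T}) : triangle e Tr -> Tr \subset V ->
  (forall x y, x \in Tr -> y \in V -> e x y -> y \in Tr) ->
  itm_free t.+1 V -> itm_free t (V :\: Tr).
Proof.
move=> triTr TrV closed free M itmM MV; apply/eqP => cardM.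
have sepTr A : A \in M -> [disjoint Tr & A] && [forall x in Tr, forall y in A, ~~ e x y].
  move=> AM; have /subsetP AV := MV A AM; apply/andP; split.
    by apply/pred0P => x /=; apply/negP => /andP [xTr /AV]; rewrite inE xTr.
  apply/forall_inP => x xTr; apply/forall_inP => y /AV; rewrite inE => /andP [yTr yV].
  by apply: contraNN yTr; apply: closed.
have TrM : Tr \notin M.
  apply/negP => /MV /subsetP TrD; have [x xTr] := triangle_gt0 triTr.
  by move: (TrD x xTr); rewrite inE xTr.
suff : #|Tr |: M| != t.+2 by rewrite cardsU1 TrM cardM /= add1n eqxx.
apply: free; first exact: induced_triangle_matchingU1.
by move=> A /setU1P [->|/MV AV] //; apply: subset_trans AV (subsetDl _ _).
Qed.

Lemma nbhd_deg2 (V : {set T}) x y z : y != z -> y \in nbhd V x -> z \in nbhd V x ->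
  #|nbhd V x| <= 2 -> nbhd V x = [set y; z].
Proof.
move=> y_ne_z yN zN deg_le2; apply/eqP; rewrite eq_sym eqEcard cards2 y_ne_z deg_le2.
by rewrite andbT; apply/subsetP => w /set2P [->|->].
Qed.

Lemma mis_dominated_by2 (V S : {set T}) x y z : S \in mis_of V -> x \in V -> x \notin S ->
  nbhd V x = [set y; z] -> y \notin S -> z \in S.
Proof.
move=> /mis_ofP [SV _ dom] xV xS Nx yS; have [w wS exw] := dom x xV xS.
have : w \in nbhd V x by rewrite !inE exw (subsetP SV).
by rewrite Nx => /set2P [wy|<-] //; rewrite -wy wS in yS.
Qed.

Lemma uniq_size_le_card (X : {set T}) (s : seq T) :
  uniq s -> all [in X] s -> size s <= #|X|.
Proof.
move=> s_uniq /allP sX; rewrite -(card_uniqP s_uniq); apply: subset_leq_card.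
by apply/subsetP => x /sX.
Qed.

(* The induction hypothesis of the upper bound, for the graph induced by V. *)
Definition sub_bound (V : {set T}) (n : nat) : Prop := forall t (X : {set T}) k,
  itm_free t (V :\: X) -> X \subset V -> 0 < k <= #|X| ->
  #|mis_of (V :\: X)| <= mist (n - k) t.

Section MinDegreeTwo.
Variables (V : {set T}) (n t : nat) (v a b : T).
Hypotheses (card_V : #|V| = n) (free : itm_free t V) (IH : sub_bound V n).
Hypotheses (vV : v \in V) (mindeg : forall u, u \in V -> 3 <= #|cnbhd V u|).
Hypotheses (a_ne_b : a != b) (Nv : nbhd V v = [set a; b]).

Lemma mis_le_removal (X : {set T}) k : X \subset V -> 0 < k <= #|X| ->
  #|mis_of (V :\: X)| <= mist (n - k) t.
Proof. by move=> XV k_le; apply: IH => //; apply: itm_freeS free; apply: subsetDl. Qed.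

Lemma card_le_n (X : {set T}) : X \subset V -> #|X| <= n.
Proof. by rewrite -card_V; apply: subset_leq_card. Qed.

Lemma nbhd_v : [/\ e v a, e v b, a \in V & b \in V].
Proof.
have: a \in nbhd V v /\ b \in nbhd V v by rewrite Nv !inE !eqxx orbT.
by rewrite !inE => -[/andP [-> ->] /andP [-> ->]].
Qed.

Lemma mis_dominates_v S : S \in mis_of V -> [|| v \in S, a \in S | b \in S].
Proof.
move=> SV; case: (mis_dominates vV SV) => [->//|[y yS]].
by rewrite Nv => /set2P [<-|<-]; rewrite yS ?orbT.
Qed.

Lemma mis_le_triangle_nbhd : e a b -> #|mis_of V| <= mist n t.
Proof.
move=> eab; have [eva evb aV bV] := nbhd_v.
set Tr := [set v; a; b].
have triTr : triangle e Tr by apply: triangle3.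
have TrV : Tr \subset V by apply/subsetP => x; rewrite !inE -!orbA => /or3P [] /eqP ->.
have t_gt0 : 0 < t.
  by case: (posnP t) free => // -> free0; case: (itm_free0_triangle free0 triTr TrV).
have cover S : S \in mis_of V -> exists2 u, u \in [:: v; a; b] & u \in S.
  move/mis_dominates_v => /or3P [vS|aS|bS]; [exists v|exists a|exists b];
    by rewrite ?inE ?eqxx ?orbT.
apply: leq_trans (card_mis_cover cover) _; rewrite !big_cons big_nil addn0.
have n_ge3 : 3 <= n by rewrite -(cards3 (adj_neq eva) (adj_neq evb) a_ne_b) card_le_n.
have [/andP [deg_a deg_b]|deg_ab] := boolP ((#|nbhd V a| <= 2) && (#|nbhd V b| <= 2)).
  have Nva : v \in nbhd V a by rewrite !inE vV e_sym.
  have Nvb : v \in nbhd V b by rewrite !inE vV e_sym.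
  have Nab : b \in nbhd V a by rewrite !inE bV.
  have Nba : a \in nbhd V b by rewrite !inE aV e_sym.
  have [Ncv Nca Ncb] : [/\ cnbhd V v = Tr, cnbhd V a = Tr & cnbhd V b = Tr].
    rewrite /cnbhd Nv (nbhd_deg2 (adj_neq evb) Nva Nab deg_a).
    rewrite (nbhd_deg2 (adj_neq eva) Nvb Nba deg_b) /Tr.
    by split; apply/setP => x; rewrite !inE; case: (x == v); case: (x == a); case: (x == b).
  rewrite Ncv Nca Ncb.
  have closed x y : x \in Tr -> y \in V -> e x y -> y \in Tr.
    move=> xTr yV exy; have : y \in cnbhd V x by rewrite !inE yV exy orbT.
    by case/setUP: xTr => [/setUP []|] /set1P ->; rewrite ?Ncv ?Nca ?Ncb.
  have free' : itm_free t.-1.+1 V by rewrite prednK.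
  have := IH (itm_free_remove_triangle triTr TrV closed free') TrV.
  rewrite cards3 ?adj_neq // => /(_ 3 isT) mis_Tr.
  have := mist_triple t_gt0 n_ge3; rewrite subn1.
  by move: #|mis_of _| mis_Tr => m; lia.
have mis_le k u : u \in V -> k <= #|cnbhd V u| -> 0 < k ->
    #|mis_of (V :\: cnbhd V u)| <= mist (n - k) t.
  by move=> uV k_le k_gt0; apply: mis_le_removal; rewrite ?cnbhd_sub ?k_gt0.
have mis_v := mis_le 3 v vV (mindeg vV) isT.
have [u [uV deg_u u_ab]] : exists u, [/\ u \in V, 4 <= #|cnbhd V u| & u \in [:: a; b]].
  move: deg_ab; rewrite negb_and -!ltnNge.
  by case/orP => deg; [exists a | exists b]; rewrite card_cnbhd !inE eqxx ?orbT.
apply: leq_trans (mist_branch_334 (leq_trans deg_u (card_le_n (cnbhd_sub uV))) t_gt0).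
rewrite mul2n -addnn -addnA; apply: leq_add mis_v _.
have mis_a := mis_le 3 a aV (mindeg aV) isT; have mis_b := mis_le 3 b bV (mindeg bV) isT.
have mis_u := mis_le 4 u uV deg_u isT.
by move: u_ab mis_u; rewrite !inE => /orP [] /eqP -> mis_u;
  [rewrite addnC|]; apply: leq_add.
Qed.
Lemma mis_le_heavy_nbr : ~~ e a b -> 3 <= #|nbhd V a| -> #|mis_of V| <= mist n t.
Proof.
move=> not_eab deg_a; have [eva evb aV bV] := nbhd_v.
set cls := [:: ([set v], cnbhd V v); ([set a], cnbhd V a); ([set b], a |: cnbhd V b)].
have nbhd_cls p : p \in cls -> forall x, x \in p.1 -> nbhd V x \subset p.2.
  rewrite !inE => /or3P [] /eqP -> x /set1P -> /=; rewrite ?nbhd_sub_cnbhd //.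
  exact: subset_trans (nbhd_sub_cnbhd V b) (subsetUr _ _).
have covered S : S \in mis_of V -> has (fun p => S :&: p.2 == p.1) cls.
  move=> SV; have /mis_ofP [_ indS _] := SV; rewrite /=.
  have [vS|vS] := boolP (v \in S); first by rewrite independent_cnbhdI // eqxx.
  have [aS|aS] := boolP (a \in S); first by rewrite (independent_cnbhdI _ indS aS) eqxx orbT.
  have bS : b \in S by move: (mis_dominates_v SV); rewrite (negbTE vS) (negbTE aS).
  by rewrite setIUr setI_set1 (negbTE aS) set0U (independent_cnbhdI _ indS bS) eqxx !orbT.
apply: leq_trans (card_mis_branch nbhd_cls covered) _; rewrite !big_cons big_nil addn0 /=.
have deg_a' : 4 <= #|cnbhd V a| by rewrite card_cnbhd.
have a_notin : a \notin cnbhd V b by rewrite !inE negb_or a_ne_b e_sym (negbTE not_eab) andbF.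
have deg_b' : 4 <= #|a |: cnbhd V b| by rewrite cardsU1 a_notin add1n ltnS mindeg.
have abV : a |: cnbhd V b \subset V by rewrite subUset sub1set aV cnbhd_sub.
apply: leq_trans (mist_branch_344 t (leq_trans deg_a' (card_le_n (cnbhd_sub aV)))).
rewrite mul2n -addnn; apply: leq_add; last apply: leq_add; apply: mis_le_removal;
  by rewrite ?cnbhd_sub ?mindeg.
Qed.

Lemma mis_le_C4 c : ~~ e a b -> nbhd V a = [set v; c] -> nbhd V b = [set v; c] ->
  c != v -> #|mis_of V| <= mist n t.
Proof.
move=> not_eab Na Nb c_ne_v; have [eva evb aV bV] := nbhd_v.
have /setIdP [cV eac] : c \in nbhd V a by rewrite Na !inE eqxx orbT.
set X := [set v; a; b; c].
set cls := [:: ([set v], cnbhd V v); ([set a; b], X)].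
have nbhd_cls p : p \in cls -> forall x, x \in p.1 -> nbhd V x \subset p.2.
  rewrite !inE => /orP [] /eqP -> x /=; first by move/set1P ->; apply: nbhd_sub_cnbhd.
  by case/set2P => ->; rewrite ?Na ?Nb; apply/subsetP => y /set2P [] ->; rewrite !inE eqxx ?orbT.
have covered S : S \in mis_of V -> has (fun p => S :&: p.2 == p.1) cls.
  move=> SV; have /mis_ofP [_ indS _] := SV; rewrite /=.
  have [vS|vS] := boolP (v \in S); first by rewrite independent_cnbhdI // eqxx.
  have [aS bS] : a \in S /\ b \in S.
    have [aS|aS] := boolP (a \in S); have [bS|bS] := boolP (b \in S) => //.
    - have cS := mis_dominated_by2 SV bV bS Nb vS.
      by case: (independentF indS aS cS eac).
    - have cS := mis_dominated_by2 SV aV aS Na vS.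
      have /setIdP [_ ebc] : c \in nbhd V b by rewrite Nb !inE eqxx orbT.
      by case: (independentF indS bS cS ebc).
    - by move: (mis_dominates_v SV); rewrite (negbTE vS) (negbTE aS) (negbTE bS).
  have cS : c \notin S by apply/negP => cS; apply: independentF indS aS cS eac.
  by rewrite !setIUr !setI_set1 (negbTE vS) aS bS (negbTE cS) setU0 !set0U eqxx orbT.
apply: leq_trans (card_mis_branch nbhd_cls covered) _; rewrite !big_cons big_nil addn0 /=.
have X_uniq : uniq [:: v; a; b; c].
  have b_ne_c : b != c by apply: contraNneq not_eab => ->.
  by rewrite /= !inE !negb_or a_ne_b b_ne_c (eq_sym v c) c_ne_v !adj_neq.
have XV : X \subset V by apply/subsetP => x; rewrite !inE -!orbA => /or4P [] /eqP ->.
have deg_X : 4 <= #|X| by apply: (uniq_size_le_card X_uniq); rewrite /= !inE !eqxx ?orbT.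
apply: leq_trans (mist_branch_344 t (leq_trans deg_X (card_le_n XV))).
apply: leq_add; first by apply: mis_le_removal; rewrite ?cnbhd_sub ?mindeg.
rewrite mul2n -addnn; apply: leq_trans (leq_addl _ _).
by apply: mis_le_removal; rewrite ?deg_X.
Qed.

Lemma mis_le_P5 c d : ~~ e a b -> nbhd V a = [set v; c] -> nbhd V b = [set v; d] ->
  c != v -> d != v -> c != d -> #|mis_of V| <= mist n t.
Proof.
move=> not_eab Na Nb c_ne_v d_ne_v c_ne_d; have [eva evb aV bV] := nbhd_v.
have /setIdP [cV eac] : c \in nbhd V a by rewrite Na !inE eqxx orbT.
have /setIdP [dV ebd] : d \in nbhd V b by rewrite Nb !inE eqxx orbT.
set X2 := [set v; a; b; c; d].
set X3 := cnbhd V a :|: cnbhd V d.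
set X4 := cnbhd V b :|: cnbhd V c.
set cls := [:: ([set v], cnbhd V v); ([set a; b], X2); ([set a; d], X3); ([set b; c], X4)].
have nbhd_cls p : p \in cls -> forall x, x \in p.1 -> nbhd V x \subset p.2.
  rewrite !inE => /or4P [] /eqP -> x /=; first by move/set1P ->; apply: nbhd_sub_cnbhd.
  - by case/set2P => ->; rewrite ?Na ?Nb; apply/subsetP => y /set2P [] ->; rewrite !inE eqxx ?orbT.
  - by case/set2P => ->; apply: subset_trans (nbhd_sub_cnbhd V _) _; rewrite ?subsetUl ?subsetUr.
  - by case/set2P => ->; apply: subset_trans (nbhd_sub_cnbhd V _) _; rewrite ?subsetUl ?subsetUr.
have covered S : S \in mis_of V -> has (fun p => S :&: p.2 == p.1) cls.
  move=> SV; have /mis_ofP [_ indS _] := SV; rewrite /=.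
  have [vS|vS] := boolP (v \in S); first by rewrite independent_cnbhdI // eqxx.
  have [aS|aS] := boolP (a \in S); have [bS|bS] := boolP (b \in S).
  - have cS : c \notin S by apply/negP => cS; apply: independentF indS aS cS eac.
    have dS : d \notin S by apply/negP => dS; apply: independentF indS bS dS ebd.
    by rewrite !setIUr !setI_set1 (negbTE vS) aS bS (negbTE cS) (negbTE dS) !setU0 !set0U eqxx orbT.
  - have dS := mis_dominated_by2 SV bV bS Nb vS.
    rewrite [S :&: X3]setIUr (independent_cnbhdI _ indS aS).
    by rewrite (independent_cnbhdI _ indS dS) eqxx !orbT.
  - have cS := mis_dominated_by2 SV aV aS Na vS.
    rewrite [S :&: X4]setIUr (independent_cnbhdI _ indS bS).
    by rewrite (independent_cnbhdI _ indS cS) eqxx !orbT.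
  - by move: (mis_dominates_v SV); rewrite (negbTE vS) (negbTE aS) (negbTE bS).
apply: leq_trans (card_mis_branch nbhd_cls covered) _; rewrite !big_cons big_nil addn0 /=.
have b_ne_c : b != c by apply: contraNneq not_eab => ->.
have a_ne_d : a != d by apply: contraNneq not_eab => ->; rewrite e_sym.
have s_uniq : uniq [:: v; a; b; c; d].
  rewrite /= !inE !negb_or a_ne_b a_ne_d b_ne_c c_ne_d (eq_sym v c) (eq_sym v d).
  by rewrite c_ne_v d_ne_v !adj_neq.
have X2V : X2 \subset V by rewrite !subUset !sub1set vV aV bV cV dV.
have X3V : X3 \subset V by rewrite subUset !cnbhd_sub.
have X4V : X4 \subset V by rewrite subUset !cnbhd_sub.
have deg_X2 : 5 <= #|X2| by apply: (uniq_size_le_card s_uniq); rewrite /= !inE !eqxx ?orbT.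
have deg_X3 : 5 <= #|X3|.
  apply: (uniq_size_le_card s_uniq).
  by rewrite /= !inE !eqxx (e_sym a v) eva vV (e_sym d b) ebd bV eac cV !orbT.
have deg_X4 : 5 <= #|X4|.
  apply: (uniq_size_le_card s_uniq).
  by rewrite /= !inE !eqxx (e_sym b v) evb vV (e_sym c a) eac aV ebd dV !orbT.
apply: leq_trans (mist_branch_3555 t (leq_trans deg_X2 (card_le_n X2V))).
apply: leq_add; first by apply: mis_le_removal; rewrite ?cnbhd_sub ?mindeg.
rewrite (mulSn 2) mul2n -addnn !addnA.
by do 3?[apply: leq_add]; apply: mis_le_removal.
Qed.

End MinDegreeTwo.
Section MinDegree.
Variables (V : {set T}) (n t : nat) (v : T).
Hypotheses (card_V : #|V| = n) (free : itm_free t V) (IH : sub_bound V n).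
Hypotheses (vV : v \in V) (v_mindeg : forall u, u \in V -> #|nbhd V v| <= #|nbhd V u|).

Lemma mis_le_mindeg_neq2 : #|nbhd V v| != 2 -> #|mis_of V| <= mist n t.
Proof.
move=> deg_v.
have cover S : S \in mis_of V -> exists2 u, u \in enum (cnbhd V v) & u \in S.
  move=> SV; case: (mis_dominates vV SV) => [vS|[y yS yN]].
    by exists v; rewrite // mem_enum setU11.
  by exists y; rewrite // mem_enum setU1r.
apply: leq_trans (card_mis_cover cover) _; rewrite big_enum /=.
apply: leq_trans (_ : \sum_(u in cnbhd V v) mist (n - #|cnbhd V v|) t <= _).
  apply: leq_sum => u uNv; have uV := subsetP (cnbhd_sub vV) u uNv.
  apply: IH; rewrite ?cnbhd_sub //.
  - by apply: itm_freeS free; apply: subsetDl.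
  - by rewrite !card_cnbhd ltnS; apply: v_mindeg.
rewrite sum_nat_const; apply: mist_branch_deg.
  by rewrite card_cnbhd eqSS.
by rewrite -card_V subset_leq_card // cnbhd_sub.
Qed.

Lemma mis_le_mindeg2 : #|nbhd V v| = 2 -> #|mis_of V| <= mist n t.
Proof.
move=> deg_v; have /cards2P [a [b [a_ne_b Nv]]] : #|nbhd V v| == 2 by rewrite deg_v.
have mindeg u : u \in V -> 3 <= #|cnbhd V u| by move=> uV; rewrite card_cnbhd ltnS -deg_v v_mindeg.
have [eva evb aV bV] := nbhd_v Nv.
have [eab|not_eab] := boolP (e a b).
  exact: (mis_le_triangle_nbhd card_V free IH vV mindeg a_ne_b Nv).
have [deg_a|deg_a] := leqP 3 #|nbhd V a|.
  exact: (mis_le_heavy_nbr card_V free IH vV mindeg a_ne_b Nv).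
have [deg_b|deg_b] := leqP 3 #|nbhd V b|.
  have Nv' : nbhd V v = [set b; a] by rewrite Nv setUC.
  by apply: (mis_le_heavy_nbr card_V free IH vV mindeg _ Nv'); rewrite 1?eq_sym // e_sym.
rewrite ltnS in deg_a deg_b.
have deg2 x : x \in V -> e v x -> #|nbhd V x| <= 2 -> exists2 y, y != v & nbhd V x = [set v; y].
  move=> xV evx deg_x; have /cards2P [y [z [y_ne_z Nx]]] : #|nbhd V x| == 2.
    by rewrite eqn_leq deg_x -deg_v; apply: v_mindeg.
  have : v \in nbhd V x by rewrite !inE vV e_sym.
  rewrite Nx => /set2P [->|->]; [exists z | exists y]; rewrite // 1?eq_sym //.
  by rewrite setUC.
have [c c_ne_v Na] := deg2 a aV eva deg_a.
have [d d_ne_v Nb] := deg2 b bV evb deg_b.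
have [c_eq_d|c_ne_d] := eqVneq c d.
  rewrite -c_eq_d in Nb.
  exact: (mis_le_C4 card_V free IH vV mindeg a_ne_b Nv not_eab Na Nb c_ne_v).
exact: (mis_le_P5 card_V free IH vV mindeg a_ne_b Nv not_eab Na Nb c_ne_v d_ne_v c_ne_d).
Qed.

End MinDegree.

Theorem card_mis_le_mist n (V : {set T}) t : #|V| = n -> itm_free t V ->
  #|mis_of V| <= mist n t.
Proof.
elim/ltn_ind: n V t => n IHn V t card_V free.
have IH : sub_bound V n.
  move=> t' X k free' XV /andP [k_gt0 k_le].
  have card_VX : #|V :\: X| = n - #|X| by rewrite cardsDS // card_V.
  have lt_n : n - #|X| < n by rewrite -card_V; have := subset_leq_card XV; lia.
  by apply: leq_trans (IHn _ lt_n _ _ card_VX free') _; apply: leq_mist; lia.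
have [n0|n_gt0] := posnP n.
  have -> : V = set0 by apply/eqP; rewrite -cards_eq0 card_V n0.
  have -> : mist n t = 1 by rewrite n0 /mist (_ : minn t (0 %/ 3) = 0) //; lia.
  rewrite -(cards1 (@set0 T)); apply: subset_leq_card.
  by apply/subsetP => S /mis_ofP [S0 _ _]; rewrite inE -subset0.
have [v0 v0V] : exists v0, v0 \in V by apply/set0Pn; rewrite -card_gt0 card_V.
case: (arg_minnP (fun x => #|nbhd V x|) v0V) => v vV v_mindeg.
have [deg_v|deg_v] := eqVneq #|nbhd V v| 2.
  exact: mis_le_mindeg2 deg_v.
exact: mis_le_mindeg_neq2 deg_v.
Qed.

Lemma card_mis_setU (A B : {set T}) : [disjoint A & B] ->
  (forall x y, x \in A -> y \in B -> ~~ e x y) ->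
  #|mis_of A| * #|mis_of B| <= #|mis_of (A :|: B)|.
Proof.
move=> disAB noedge; rewrite -cardsX.
have trace (X Y : {set T}) : X \subset A -> Y \subset B ->
    (X :|: Y) :&: A = X /\ (X :|: Y) :&: B = Y.
  move=> XA YB; rewrite !setIUl (setIidPl XA) (setIidPl YB).
  have [-> ->] : Y :&: A = set0 /\ X :&: B = set0.
    split; apply/eqP; rewrite setI_eq0; last exact: disjointWl XA disAB.
    by apply: disjointWl YB _; rewrite disjoint_sym.
  by rewrite setU0 set0U.
have inj : {in setX (mis_of A) (mis_of B) &, injective (fun p => p.1 :|: p.2)}.
  move=> [S1 S2] [S3 S4]; rewrite !in_setX /=.
  move=> /andP [/mis_ofP [S1A _ _] /mis_ofP [S2B _ _]].
  move=> /andP [/mis_ofP [S3A _ _] /mis_ofP [S4B _ _]].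
  move=> /= eqU; have [eqA1 eqB1] := trace _ _ S1A S2B; have [eqA3 eqB3] := trace _ _ S3A S4B.
  by congr pair; [rewrite -eqA1 eqU eqA3 | rewrite -eqB1 eqU eqB3].
rewrite -(card_in_imset inj); apply: subset_leq_card; apply/subsetP => S.
move=> /imsetP [[S1 S2]]; rewrite in_setX /=.
move=> /andP [/mis_ofP [S1A indS1 dom1] /mis_ofP [S2B indS2 dom2]] ->.
apply/mis_ofP; split; first exact: setUSS.
  apply/independentP => x y /setUP [xS|xS] /setUP [yS|yS].
  - exact: (independentP _ indS1).
  - exact: noedge (subsetP S1A x xS) (subsetP S2B y yS).
  - by rewrite e_sym; apply: noedge (subsetP S1A y yS) (subsetP S2B x xS).
  - exact: (independentP _ indS2).
move=> x /setUP [xA|xB]; rewrite inE negb_or => /andP [xS1 xS2].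
  by have [y yS exy] := dom1 x xA xS1; exists y; rewrite // inE yS.
by have [y yS exy] := dom2 x xB xS2; exists y; rewrite // inE yS orbT.
Qed.

Lemma card_mis_clique (C : {set T}) : (forall x y, x \in C -> y \in C -> x != y -> e x y) ->
  #|C| <= #|mis_of C|.
Proof.
move=> clique; rewrite -(card_imset (mem C) set1_inj); apply: subset_leq_card.
apply/subsetP => _ /imsetP [x xC ->]; apply/mis_ofP; split.
- by rewrite sub1set.
- by apply/independentP => y z /set1P -> /set1P ->; rewrite e_irr.
- by move=> y yC /set1P y_ne_x; exists x; rewrite ?inE // clique //; apply/eqP.
Qed.

End MaximalIndependentSets.

Definition c5_adj (i j : nat) := ((i.+1) %% 5 == j) || ((j.+1) %% 5 == i).

(* The vertices [0, pair_start) form either the 5-cycle 0-1-2-3-4 (if c5) or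
   the p triangles {3b, 3b+1, 3b+2}; the remaining vertices are grouped into r
   edges {pair_start + 2j, pair_start + 2j + 1}.  [block i] numbers these
   components, and [nbig] is the number of components of the first kind. *)
Section ExtremalGraph.
Variables (n p r : nat) (c5 : bool).
Hypothesis n_eq : n = (if c5 then 5 else 3 * p) + 2 * r.

Definition pair_start := if c5 then 5 else 3 * p.
Definition nbig := if c5 then 1 else p.
Definition block (i : nat) :=
  if i < pair_start then (if c5 then 0 else i %/ 3) else nbig + (i - pair_start) %/ 2.
Definition in_c5 (i : nat) := c5 && (i < 5).
Definition ext_adj (i j : nat) :=
  [&& i != j, block i == block j & ~~ in_c5 i || c5_adj i j].
Definition ext_graph : rel 'I_n := fun x y => ext_adj x y.

Lemma block_c5 i : c5 -> (block i == 0) = (i < 5).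
Proof. by rewrite /block /pair_start /nbig => ->; case: (ltnP i 5). Qed.

Lemma in_c5_block i j : block i = block j -> in_c5 i = in_c5 j.
Proof.
rewrite /in_c5; case hc: c5 => //= h.
by rewrite -!block_c5 // h.
Qed.

Lemma c5_adj_sym i j : c5_adj i j = c5_adj j i.
Proof. by rewrite /c5_adj orbC. Qed.

Lemma ext_graph_sym : symmetric ext_graph.
Proof.
move=> x y; rewrite /ext_graph /ext_adj.
case: (eqVneq (block x) (block y)) => [h|h].
  by rewrite (in_c5_block h) c5_adj_sym eq_sym.
by rewrite !andbF.
Qed.

Lemma ext_graph_irr : irreflexive ext_graph.
Proof. by move=> x; rewrite /ext_graph /ext_adj eqxx. Qed.

Lemma ext_graph_block x y : ext_graph x y -> block x = block y.
Proof. by rewrite /ext_graph /ext_adj => /and3P [_ /eqP -> _]. Qed.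

Definition blk b := [set x : 'I_n | block x == b].
Definition blocks_below q := [set x : 'I_n | block x < q].

Definition blk_size b :=
  if c5 then (if b == 0 then 5 else 2) else (if b < p then 3 else 2).

Lemma card_le_vals (s : seq nat) (A : {set 'I_n}) :
  (forall x, x \in A -> val x \in s) -> #|A| <= size s.
Proof.
move=> h; rewrite cardE -(size_map val); apply: uniq_leq_size.
  by rewrite (map_inj_uniq val_inj) enum_uniq.
by move=> i /mapP [x]; rewrite mem_enum => xA ->; apply: h.
Qed.

Lemma card_ge_vals (s : seq nat) (A : {set 'I_n}) : uniq s ->
  (forall i, i \in s -> exists2 x, x \in A & val x = i) -> size s <= #|A|.
Proof.
move=> us h; rewrite cardE -(size_map val); apply: uniq_leq_size => // i /h [x xA <-].
by apply/mapP; exists x; rewrite ?mem_enum.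
Qed.

Lemma block_lt_start i : i < pair_start -> block i < nbig.
Proof. rewrite /block /pair_start /nbig; case: c5 => h; rewrite h //; lia. Qed.

Lemma block_ge_start i : pair_start <= i -> block i = nbig + (i - pair_start) %/ 2.
Proof. by rewrite /block => h; rewrite ltnNge h. Qed.

Lemma blk_clique b : ~~ (c5 && (b == 0)) ->
  forall x y, x \in blk b -> y \in blk b -> x != y -> ext_graph x y.
Proof.
move=> hb x y; rewrite !inE => /eqP hx /eqP hy nxy.
rewrite /ext_graph /ext_adj nxy hx hy eqxx /=.
apply/orP; left; rewrite /in_c5; apply/negP => /andP [hc x5].
by move: hb; rewrite hc -hx /= block_c5 // x5.
Qed.

Lemma pair_start_add : pair_start + 2 * r = n.
Proof. by rewrite n_eq /pair_start. Qed.

Lemma blk_size_le_card b : b < nbig + r -> ~~ (c5 && (b == 0)) -> blk_size b <= #|blk b|.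
Proof.
move=> hbr hb; have n_eq' := pair_start_add.
case: (boolP (~~ c5 && (b < p))) => [/andP [hc bp]|hcb].
  have -> : blk_size b = size [:: 3 * b; 3 * b + 1; 3 * b + 2] by rewrite /blk_size (negbTE hc) bp.
  apply: card_ge_vals; first by rewrite /= !inE; apply/and3P; split => //; lia.
  move=> i; rewrite !inE => hi.
  have hin : i < n by move: n_eq'; rewrite /pair_start (negbTE hc); lia.
  exists (Ordinal hin) => //; rewrite inE /= /block /pair_start /nbig (negbTE hc).
  have -> : i < 3 * p by lia.
  apply/eqP; lia.
have hge : nbig <= b.
  move: hb hcb; rewrite /nbig; case: c5 => /=; lia.
have -> : blk_size b = size [:: pair_start + 2 * (b - nbig); pair_start + 2 * (b - nbig) + 1].
  rewrite /blk_size; move: hb hcb hge; rewrite /nbig.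
  by case: c5 => /=; case: (b == 0); case: (b < p) => //; lia.
apply: card_ge_vals; first by rewrite /= !inE; lia.
move=> i; rewrite !inE => hi.
have hin : i < n by rewrite -n_eq'; lia.
exists (Ordinal hin) => //; rewrite inE /=.
rewrite block_ge_start; last lia.
apply/eqP; lia.
Qed.

Lemma c5_mis_nonadj i : i < 5 -> ~~ c5_adj i ((i + 2) %% 5) && ~~ c5_adj ((i + 2) %% 5) i.
Proof. by case: i => [|[|[|[|[|i]]]]]. Qed.

Lemma c5_mis_dominating i j : i < 5 -> j < 5 -> j != i -> j != (i + 2) %% 5 ->
  c5_adj j i || c5_adj j ((i + 2) %% 5).
Proof. by case: i => [|[|[|[|[|i]]]]] //; case: j => [|[|[|[|[|j]]]]]. Qed.

Lemma c5_adj_no_triangle i j k : i < 5 -> j < 5 -> k < 5 -> i != j -> i != k -> j != k ->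
  c5_adj i j -> c5_adj i k -> c5_adj j k -> False.
Proof.
by case: i => [|[|[|[|[|i]]]]] //; case: j => [|[|[|[|[|j]]]]] //; case: k => [|[|[|[|[|k]]]]].
Qed.

Definition c5_mis (i : nat) := [set x : 'I_n | (val x == i) || (val x == (i + 2) %% 5)].

Lemma ext_graph_c5 (x y : 'I_n) : c5 -> x < 5 -> y < 5 -> ext_graph x y = (x != y) && c5_adj x y.
Proof.
move=> hc hx hy; rewrite /ext_graph /ext_adj /in_c5 hc hx /=.
have /eqP -> : block x == 0 by rewrite block_c5.
by have /eqP -> : block y == 0 by rewrite block_c5.
Qed.

Lemma c5_mis_of i : c5 -> i < 5 -> c5_mis i \in mis_of ext_graph (blk 0).
Proof.
move=> hc hi; have n_ge5 : 5 <= n by rewrite n_eq hc; lia.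
have i2 : (i + 2) %% 5 < 5 by apply: ltn_pmod.
have hS : forall x : 'I_n, x \in c5_mis i -> x < 5.
  by move=> x; rewrite inE => /orP [] /eqP ->.
apply/mis_ofP; split.
- by apply/subsetP => x xS; rewrite inE block_c5 // hS.
- apply/independentP => x y xS yS; rewrite ext_graph_c5 ?hS //.
  case: (eqVneq x y) => [->|nxy]; first by [].
  have /andP [n1 n2] := c5_mis_nonadj hi.
  move: xS yS; rewrite !inE => /orP [] /eqP hx /orP [] /eqP hy.
  + by move: nxy; rewrite -val_eqE hx hy eqxx.
  + by rewrite hx hy (negbTE n1) andbF.
  + by rewrite hx hy (negbTE n2) andbF.
  + by move: nxy; rewrite -val_eqE hx hy eqxx.
- move=> x; rewrite inE block_c5 // => hx; rewrite inE negb_or => /andP [h1 h2].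
  have := c5_mis_dominating hi hx h1 h2.
  case hk : (c5_adj x i) => /= hk2.
    have hin : i < n by lia.
    exists (Ordinal hin); first by rewrite inE eqxx.
    by rewrite ext_graph_c5 //= hk andbT.
  have hin : (i + 2) %% 5 < n by lia.
  exists (Ordinal hin); first by rewrite inE eqxx orbT.
  by rewrite ext_graph_c5 //= hk2 andbT.
Qed.

Lemma c5_mis_inj i j : c5 -> i < 5 -> j < 5 -> c5_mis i = c5_mis j -> i = j.
Proof.
move=> hc hi hj h; have n_ge5 : 5 <= n by rewrite n_eq hc; lia.
have hin : i < n by lia.
have hjn : j < n by lia.
have : Ordinal hin \in c5_mis j by rewrite -h inE eqxx.
have : Ordinal hjn \in c5_mis i by rewrite h inE eqxx.
by rewrite !inE /= => /orP [/eqP ->//|/eqP h1] /orP [/eqP ->//|/eqP h2]; lia.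
Qed.

Lemma card_mis_c5 : c5 -> 5 <= #|mis_of ext_graph (blk 0)|.
Proof.
move=> hc.
have inj : injective (fun i : 'I_5 => c5_mis i).
  by move=> i j /c5_mis_inj h; apply: val_inj; apply: h.
have := card_imset (mem [set: 'I_5]) inj; rewrite cardsT card_ord => <-.
apply: subset_leq_card; apply/subsetP => S /imsetP [i _ ->].
exact: c5_mis_of.
Qed.

Lemma card_mis_blk b : b < nbig + r -> blk_size b <= #|mis_of ext_graph (blk b)|.
Proof.
move=> hbr; case: (boolP (c5 && (b == 0))) => [/andP [hc /eqP ->]|hb].
  by rewrite /blk_size hc /=; exact: card_mis_c5.
apply: leq_trans (blk_size_le_card hbr hb) _.
exact: (card_mis_clique ext_graph_irr (blk_clique hb)).
Qed.

Lemma card_mis_blocks_below q : q <= nbig + r ->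
  \prod_(b < q) blk_size b <= #|mis_of ext_graph (blocks_below q)|.
Proof.
elim: q => [|q IH] hq.
  rewrite big_ord0 card_gt0; apply/set0Pn; exists set0; apply/mis_ofP; split.
  - by apply: sub0set.
  - by apply/independentP => x y; rewrite inE.
  - by move=> x; rewrite inE.
rewrite big_ord_recr /=.
have -> : blocks_below q.+1 = blocks_below q :|: blk q.
  by apply/setP => x; rewrite !inE ltnS leq_eqVlt orbC.
apply: leq_trans (card_mis_setU ext_graph_sym _ _).
- by apply: leq_mul; [apply: IH; lia|apply: card_mis_blk].
- rewrite -setI_eq0; apply/eqP/setP => x; rewrite !inE.
  by apply/negP => /andP [h1 /eqP h2]; move: h1; rewrite h2 ltnn.
- move=> x y; rewrite !inE => hx /eqP hy; apply/negP => /ext_graph_block h.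
  by move: hx; rewrite h hy ltnn.
Qed.

Lemma blocks_below_all : blocks_below (nbig + r) = setT.
Proof.
apply/setP => x; rewrite !inE.
case: (ltnP x pair_start) => h.
  by apply: leq_trans (block_lt_start h) (leq_addr _ _).
rewrite block_ge_start // ltn_add2l.
have hx := ltn_ord x; have hn2 := pair_start_add; lia.
Qed.

Lemma prod_blk_size : \prod_(b < nbig + r) blk_size b = (if c5 then 5 else 3 ^ p) * 2 ^ r.
Proof.
rewrite -(big_mkord xpredT) (@big_cat_nat _ _ _ nbig) /=; [|by []|exact: leq_addr].
congr (_ * _).
  rewrite /nbig /blk_size; case: c5 => /=.
    by rewrite big_nat1.
  rewrite (eq_big_nat _ _ (F2 := fun _ => 3)); first by rewrite prod_nat_const_nat subn0.
  by move=> i /andP [_ ->].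
rewrite (eq_big_nat _ _ (F2 := fun _ => 2)); first by rewrite prod_nat_const_nat addKn.
move=> i /andP [h1 _]; rewrite /blk_size; move: h1; rewrite /nbig; case: c5 => h1.
  by have -> : (i == 0) = false by apply/eqP; lia.
by rewrite ltnNge h1.
Qed.

Lemma card_blk_triangle b : ~~ c5 -> b < p -> #|blk b| <= 3.
Proof.
move=> not_c5 b_lt; have n_eq' := pair_start_add.
apply: (@card_le_vals [:: 3 * b; 3 * b + 1; 3 * b + 2]) => y; rewrite inE => /eqP y_b.
rewrite !inE (_ : \val y = nat_of_ord y) //; case: (ltnP y pair_start) => y_lt.
  move: y_b y_lt; rewrite /block /pair_start /nbig (negbTE not_c5) => y_b y_lt.
  by rewrite y_lt in y_b; lia.
by move: y_b; rewrite block_ge_start // /nbig (negbTE not_c5); lia.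
Qed.

Lemma card_blk_pair b : nbig <= b -> #|blk b| <= 2.
Proof.
move=> b_ge; have n_eq' := pair_start_add.
apply: (@card_le_vals [:: pair_start + 2 * (b - nbig); pair_start + 2 * (b - nbig) + 1]) => y.
rewrite inE => /eqP y_b; rewrite !inE (_ : \val y = nat_of_ord y) //.
case: (ltnP y pair_start) => y_lt.
  by have := block_lt_start y_lt; rewrite y_b; lia.
by move: y_b; rewrite block_ge_start //; lia.
Qed.

Lemma c5_no_triangle (A : {set 'I_n}) : c5 -> A \subset blk 0 -> ~~ triangle ext_graph A.
Proof.
move=> hc /subsetP A0; apply/negP => /andP [/eqP cA /forall_inP adjA].
have lt5 w : w \in A -> w < 5 by move/A0; rewrite inE block_c5.
have adj y z : y \in A -> z \in A -> y != z -> c5_adj y z.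
  move=> yA zA y_ne_z; move/forall_inP/(_ z zA): (adjA y yA); rewrite y_ne_z /=.
  by rewrite ext_graph_c5 ?lt5 // => /andP [].
have [x xA] : exists x, x \in A by apply/set0Pn; rewrite -card_gt0 cA.
have /cards2P [y [z [y_ne_z Ax]]] : #|A :\ x| == 2.
  by move: cA; rewrite (cardsD1 x A) xA add1n => -[->].
have /setD1P [y_ne_x yA] : y \in A :\ x by rewrite Ax !inE eqxx.
have /setD1P [z_ne_x zA] : z \in A :\ x by rewrite Ax !inE eqxx orbT.
have x_ne_y : x != y by rewrite eq_sym.
have x_ne_z : x != z by rewrite eq_sym.
apply: (c5_adj_no_triangle (lt5 x xA) (lt5 y yA) (lt5 z zA)); rewrite ?val_eqE //; exact: adj.
Qed.

Lemma triangle_blk (A : {set 'I_n}) : triangle ext_graph A -> exists b : 'I_p, A = blk b.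
Proof.
move=> triA; have /andP [/eqP cA /forall_inP adjA] := triA.
have [x xA] : exists x, x \in A by apply/set0Pn; rewrite -card_gt0 cA.
have A_blk : A \subset blk (block x).
  apply/subsetP => y yA; rewrite inE; have [->//|y_ne_x] := eqVneq y x.
  apply/eqP/esym/ext_graph_block.
  by move/forall_inP/(_ y yA): (adjA x xA); rewrite eq_sym y_ne_x.
have card_A := subset_leq_card A_blk; rewrite cA in card_A.
have [bx_lt|bx_ge] := ltnP (block x) nbig; last by move: (leq_trans card_A (card_blk_pair bx_ge)).
case: (boolP c5) => [hc|not_c5].
  have bx0 : block x = 0 by move: bx_lt; rewrite /nbig hc; lia.
  by rewrite bx0 in A_blk; case/negP: (c5_no_triangle hc A_blk).
have bx_p : block x < p by move: bx_lt; rewrite /nbig (negbTE not_c5).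
exists (Ordinal bx_p); apply/eqP; rewrite eqEcard A_blk cA /=.
exact: card_blk_triangle.
Qed.

Lemma ext_graph_no_itm t : p <= t -> ~ has_induced_triangle_matching ext_graph t.+1.
Proof.
move=> hpt [M [/andP [/forallP hM _] cM]].
have sub : M \subset [set blk b | b : 'I_p].
  apply/subsetP => A AM; move: (hM A); rewrite AM /= => /triangle_blk [b ->].
  by apply/imsetP; exists b.
have h2 : #|[set blk b | b : 'I_p]| <= p.
  by apply: leq_trans (leq_imset_card _ _) _; rewrite card_ord.
have := leq_trans (subset_leq_card sub) h2; rewrite cM; lia.
Qed.

End ExtremalGraph.

Lemma mist_value n t : 3 * t <= n -> (t = 0 -> 4 <= n) -> mist n t = mis_t_value n t.
Proof.
move=> t_le n_ge4; rewrite mistE; last by rewrite leq_divRL // mulnC.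
rewrite /mist_form /mis_t_value; case m_odd: (odd (n - 3 * t)) => //=.
case: t t_le n_ge4 m_odd => [|t] _ n_ge4 //=; rewrite muln0 subn0 => n_odd.
by rewrite mis0_odd //; have := modn2 n; rewrite n_odd /=; lia.
Qed.

Lemma mis_le_mis_t_value n t (e : rel 'I_n) : 3 * t <= n -> (t = 0 -> 4 <= n) ->
  simple_graph e -> ~ has_induced_triangle_matching e t.+1 -> mis e <= mis_t_value n t.
Proof.
move=> t_le n_ge4 [e_sym e_irr] no_itm; rewrite (mis_setT e_sym e_irr) -mist_value //.
apply: (card_mis_le_mist e_sym e_irr); first by rewrite cardsT card_ord.
by move=> M itmM _; apply/eqP => cardM; apply: no_itm; exists M.
Qed.

Lemma mis_ext_graph_ge n p r c5 (n_eq : n = (if c5 then 5 else 3 * p) + 2 * r) :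
  (if c5 then 5 else 3 ^ p) * 2 ^ r <= mis (@ext_graph n p c5).
Proof.
rewrite (mis_setT (ext_graph_sym p c5) (@ext_graph_irr n p c5)) -(blocks_below_all n_eq).
by rewrite -(prod_blk_size n_eq); apply: (card_mis_blocks_below n_eq (leqnn _)).
Qed.

(* The extremal graphs: t triangles and (n - 3t)/2 edges; t - 1 triangles and
   (n - 3t + 3)/2 edges; or a 5-cycle and (n - 5)/2 edges. *)
Lemma mis_t_value_shape n t : 3 * t <= n -> (t = 0 -> 4 <= n) ->
  exists p r c5, [/\ n = (if c5 then 5 else 3 * p) + 2 * r, p <= t &
    (if c5 then 5 else 3 ^ p) * 2 ^ r = mis_t_value n t].
Proof.
move=> t_le n_ge4; rewrite /mis_t_value.
have := modn2 (n - 3 * t); case: (boolP (odd (n - 3 * t))) => /= [m_odd|m_even] m_mod2.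
  case: t t_le n_ge4 m_odd m_mod2 => [|t] t_le n_ge4 m_odd m_mod2.
    exists 0, ((n - 5) %/ 2), true; split=> //; lia.
  exists t, ((n - 3 * t.+1 + 3) %/ 2), false; rewrite subn1; split=> //; lia.
by exists t, ((n - 3 * t) %/ 2), false; split=> //; lia.
Qed.

Theorem mainTheorem1 (n t : nat) :
  1 <= n -> 3 * t <= n -> (t = 0 -> 4 <= n) ->
  (forall e : rel 'I_n, simple_graph e ->
     ~ has_induced_triangle_matching e t.+1 -> mis e <= mis_t_value n t)
  /\
  (exists e : rel 'I_n, simple_graph e /\
     ~ has_induced_triangle_matching e t.+1 /\ mis e = mis_t_value n t).
Proof.
move=> _ t_le n_ge4; split=> [e|]; first exact: mis_le_mis_t_value.
have [p [r [c5 [n_eq p_le val_eq]]]] := mis_t_value_shape t_le n_ge4.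
have simple : simple_graph (ext_graph p c5) by split; [exact: ext_graph_sym | exact: ext_graph_irr].
have no_itm := ext_graph_no_itm n_eq p_le.
exists (ext_graph p c5); split=> //; split=> //; apply/eqP.
by rewrite eqn_leq mis_le_mis_t_value //= -val_eq mis_ext_graph_ge.
Qed.
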